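(* Let $\mathscr N$ be a weakly reversible chemical reaction network such that every decomposition $\mathscr N=\mathscr N_1\cup\cdots\cup\mathscr N_k$ satisfies $\delta=\delta_1+\cdots+\delta_k$. Then every independent decomposition of $\mathscr N$ is weakly reversible.
   Context: A chemical reaction network (CRN) $\mathscr N=(\mathscr S,\mathscr C,\mathscr R)$ consists of: - a finite set $\mathscr S$ of species; - a finite set $\mathscr C\subseteq\mathbb R^{\mathscr S}_{\ge0}$ of complexes; - a set $\mathscr R\subseteq\mathscr C\times\mathscr C$ of reactions (a directed graph on $\mathscr C$), with no reaction $y\to y$ and every complex occurring in some reaction. Linkage classes are the connected components of the underlying undirected graph. The network is weakly reversible if every linkage class is strongly connected. The deficiency is $\delta=n-l-s$, where: - $n$ is the number of complexes; - $l$ is the number of linkage classes; - $s=\dim S$, with $S=\operatorname{span}\{y'-y: y\to y'\in\mathscr R\}$ the stoichiometric subspace. A decomposition $\mathscr N=\mathscr N_1\cup\cdots\cup\mathscr N_k$ is the set of subnetworks induced by a partition $\{\mathscr R_1,\ldots,\mathscr R_k\}$ of $\mathscr R$. Each $\mathscr N_i$ has reactions $\mathscr R_i$ and the complexes occurring in them, with deficiency $\delta_i=n_i-l_i-s_i$. The decomposition is independent if $S=S_1\oplus\cdots\oplus S_k$. It is weakly reversible if every $\mathscr N_i$ is weakly reversible. *)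

From HB Require Import structures.
From mathcomp Require Import all_boot all_order all_algebra.
Set Implicit Arguments. Unset Strict Implicit. Unset Printing Implicit Defensive.
Import Order.TTheory GRing.Theory Num.Theory.
Local Open Scope ring_scope.

Section CRN.
Variables (R : realFieldType) (m : nat).
(* Species are indexed by 'I_m; a complex is a row vector in R^m. *)
Definition complex := 'rV[R]_m.
Definition reaction := (complex * complex)%type.

(* A CRN is given by its (finite, duplicate-free) list of reactions;
   the complexes are exactly those occurring in some reaction. *)
Definition is_crn (rs : seq reaction) : bool :=
  [&& uniq rs,
      all (fun r : reaction => r.1 != r.2) rs &
      all (fun r : reaction => [forall j, (0 <= r.1 0 j) && (0 <= r.2 0 j)]) rs].

Definition complexes (rs : seq reaction) : seq complex :=
  undup (flatten [seq [:: r.1; r.2] | r <- rs]).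

Definition ncompl (rs : seq reaction) : nat := size (complexes rs).

Definition rgraph (rs : seq reaction) : rel 'I_(ncompl rs) :=
  fun i j => (nth 0 (complexes rs) i, nth 0 (complexes rs) j) \in rs.

Definition ugraph (rs : seq reaction) : rel 'I_(ncompl rs) :=
  fun i j => rgraph i j || rgraph j i.

Definition nlink (rs : seq reaction) : nat :=
  #|[set [set j | connect (@ugraph rs) i j] | i : 'I_(ncompl rs)]|.

Definition weakly_reversible (rs : seq reaction) : Prop :=
  forall i j : 'I_(ncompl rs), connect (@ugraph rs) i j -> connect (@rgraph rs) i j.

(* stoichiometric matrix: its row space is the stoichiometric subspace S *)
Definition stoich (rs : seq reaction) : 'M[R]_(size rs, m) :=
  \matrix_(i < size rs) ((nth (0, 0) rs i).2 - (nth (0, 0) rs i).1).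

Definition sdim (rs : seq reaction) : nat := \rank (stoich rs).

Definition deficiency (rs : seq reaction) : int :=
  (ncompl rs)%:Z - (nlink rs)%:Z - (sdim rs)%:Z.

(* A decomposition into k subnetworks: a partition of the reactions given by
   a labelling f with every block nonempty; block i is the subnetwork
   with reactions R_i. *)
Definition block (rs : seq reaction) (k : nat) (f : reaction -> 'I_k) (i : 'I_k)
  : seq reaction := [seq r <- rs | f r == i].

Definition is_decomposition (rs : seq reaction) (k : nat) (f : reaction -> 'I_k) : Prop :=
  forall i : 'I_k, block rs f i != [::].

Definition independent (rs : seq reaction) (k : nat) (f : reaction -> 'I_k) : Prop :=
  (stoich rs == \sum_(i < k) <<stoich (block rs f i)>>)%MS
  /\ mxdirect (\sum_(i < k) <<stoich (block rs f i)>>)%MS.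

Definition weakly_reversible_decomposition
  (rs : seq reaction) (k : nat) (f : reaction -> 'I_k) : Prop :=
  forall i : 'I_k, weakly_reversible (block rs f i).

End CRN.

From Pilot Require Import Defs.
From HB Require Import structures.
From mathcomp Require Import all_boot all_order all_algebra zify.
Set Implicit Arguments. Unset Strict Implicit. Unset Printing Implicit Defensive.
Import Order.TTheory GRing.Theory Num.Theory.
Local Open Scope ring_scope.

(* Write the stoichiometric matrix as [stoich = incidence *m Y],
   where [incidence] maps reactions to (complex-indexed) differences
   e_{y'} - e_y and [Y] lists the complexes.  The indicator vectors of the
   linkage classes are independent and lie in the kernel of [incidence], so
     deficiency = (n - l - rank incidence) + dim (Im incidence ∩ ker Y),
   a sum of two natural numbers; in particular every deficiency is >= 0, and a
   deficiency-zero network sends any flux that is balanced on species to a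
   flux balanced on complexes.
   A single reaction has deficiency 0; applying the additivity hypothesis to
   the decomposition into single reactions gives deficiency N = 0, and then to
   an arbitrary decomposition gives deficiency N_i = 0 for every block.
   A weakly reversible network carries a strictly positive circulation w
   (a flux with zero net flow at every complex), and conversely a positive
   circulation forces weak reversibility (a cut argument).  For an independent
   decomposition the species balance of w splits into one balance per block;
   deficiency zero turns it into complex balance, so w restricted to each
   block is a positive circulation, and each block is weakly reversible. *)

Section FiniteSums.
Variable R : nzRingType.

Lemma sum_delta (T : eqType) (s : seq T) (x : T) (F : T -> R) :
  uniq s -> x \in s -> \sum_(y <- s) (y == x)%:R * F y = F x.
Proof.
move=> us xs; rewrite (big_rem x) //= eqxx mul1r big1_seq ?addr0 // => y /= yr.
by case: eqP yr => [->|_ _]; [rewrite mem_rem_uniqF | rewrite mul0r].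
Qed.

Lemma sum_nth_delta (T : eqType) (x0 : T) (s : seq T) (j0 : 'I_(size s))
    (G : 'I_(size s) -> R) :
  uniq s -> \sum_(j < size s) (nth x0 s j == nth x0 s j0)%:R * G j = G j0.
Proof.
move=> us; rewrite (bigD1 j0) //= eqxx mul1r big1 ?addr0 // => j nej.
rewrite nth_uniq //; case: eqP => [/val_inj/eqP|]; last by rewrite mul0r.
by rewrite (negbTE nej).
Qed.

End FiniteSums.

Lemma nth_ord_exists (T : eqType) (x0 : T) (s : seq T) (x : T) :
  x \in s -> exists j : 'I_(size s), nth x0 s j = x.
Proof.
move=> xs; have xi : (index x s < size s)%N by rewrite index_mem.
by exists (Ordinal xi); rewrite /= nth_index.
Qed.

Lemma mxdirect_sum_eq0 (F : fieldType) (k n : nat) (A : 'I_k -> 'M[F]_n)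
    (u : 'I_k -> 'rV[F]_n) :
  mxdirect (\sum_(i < k) A i) -> (forall i, u i <= A i)%MS ->
  \sum_(i < k) u i = 0 -> forall i, u i = 0.
Proof.
move/mxdirect_sumsP => dx uA su i.
apply/eqP; rewrite -submx0 -(dx i isT) sub_capmx uA /=.
have -> : u i = - \sum_(j | true && (j != i)) u j.
  by apply/eqP; rewrite -addr_eq0 -(bigD1 i) //= su.
by rewrite eqmx_opp; apply: summx_sub_sums.
Qed.

Section Network.
Variables (R : realFieldType) (m : nat).
Local Notation cpx := (complex R m).
Local Notation rct := (reaction R m).
Implicit Types (rs s : seq rct) (w : rct -> R).

Lemma mem_complexes rs r : r \in rs ->
  (r.1 \in complexes rs) /\ (r.2 \in complexes rs).
Proof.
move=> rr; rewrite /complexes !mem_undup; split; apply/flattenP;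
  exists [:: r.1; r.2]; rewrite ?inE ?eqxx ?orbT //; exact: map_f.
Qed.

Lemma uniq_complexes rs : uniq (complexes rs).
Proof. exact: undup_uniq. Qed.

Lemma nth_complexes_inj rs :
  injective (fun c : 'I_(ncompl rs) => nth 0 (complexes rs) c).
Proof. by move=> c1 c2 /eqP; rewrite nth_uniq ?uniq_complexes // => /eqP/val_inj. Qed.

Lemma reaction_edge rs r : r \in rs ->
  exists a b : 'I_(ncompl rs), [/\ nth 0 (complexes rs) a = r.1,
    nth 0 (complexes rs) b = r.2 & Defs.rgraph a b].
Proof.
move=> rr; have [h1 h2] := mem_complexes rr.
have [a ea] := nth_ord_exists 0 h1; have [b eb] := nth_ord_exists 0 h2.
by exists a, b; split; rewrite // /Defs.rgraph ea eb -surjective_pairing.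
Qed.

Definition incidence rs : 'M[R]_(size rs, ncompl rs) :=
  \matrix_(i, j) ((nth 0 (complexes rs) j == (nth (0,0) rs i).2)%:R
                - (nth 0 (complexes rs) j == (nth (0,0) rs i).1)%:R).

Definition complex_mx rs : 'M[R]_(ncompl rs, m) :=
  \matrix_(j, k) (nth 0 (complexes rs) j) 0 k.

Lemma incidence_row rs (i : 'I_(size rs)) :
  exists a b : 'I_(ncompl rs),
    [/\ nth 0 (complexes rs) a = (nth (0,0) rs i).1,
        nth 0 (complexes rs) b = (nth (0,0) rs i).2, Defs.rgraph a b &
        forall G, \sum_j incidence rs i j * G j = G b - G a].
Proof.
have [a [b [ea eb ab]]] := reaction_edge (mem_nth (0,0) (ltn_ord i)).
exists a, b; split=> // G; under eq_bigr => j _ do rewrite mxE mulrBl.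
by rewrite sumrB -ea -eb !sum_nth_delta ?uniq_complexes.
Qed.

Lemma stoich_incidence rs : stoich rs = incidence rs *m complex_mx rs.
Proof.
apply/matrixP => i k; have [a [b [ea eb _ rowE]]] := incidence_row i.
rewrite !mxE; under eq_bigr => j _ do rewrite [complex_mx _ _ _]mxE.
by rewrite rowE ea eb.
Qed.

Lemma connect_ugraph_sym rs : connect_sym (@ugraph R m rs).
Proof. by apply: sym_connect_sym => x y; rewrite /ugraph orbC. Qed.

Lemma linkage_classP rs (p : 'I_(nlink rs)) :
  exists i, enum_val p = [set j | connect (@ugraph R m rs) i j].
Proof. by have /imsetP[i _ ->] := enum_valP p; exists i. Qed.

Lemma linkage_class_eq rs (p q : 'I_(nlink rs)) j :
  j \in enum_val p -> j \in enum_val q -> p = q.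
Proof.
have [x Ep] := linkage_classP p; have [y Eq] := linkage_classP q.
rewrite Ep Eq !inE => xj yj; apply: enum_val_inj; rewrite Ep Eq; apply/setP => z.
rewrite !inE; have sym := @connect_ugraph_sym rs.
apply/idP/idP => h.
  by apply: connect_trans yj _; apply: connect_trans h; rewrite sym.
by apply: connect_trans xj _; apply: connect_trans h; rewrite sym.
Qed.

Definition class_mx rs : 'M[R]_(nlink rs, ncompl rs) :=
  \matrix_(p < nlink rs, j < ncompl rs)
    (j \in (enum_val p : {set 'I_(ncompl rs)}))%:R.

(* Both ends of a reaction lie in the same linkage class, so the class
   indicators are in the kernel of the incidence matrix. *)
Lemma incidence_class_mx rs : incidence rs *m (class_mx rs)^T = 0.
Proof.
apply/matrixP => i p; have [a [b [_ _ ab rowE]]] := incidence_row i.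
rewrite [LHS]mxE [RHS]mxE.
under eq_bigr => j _ do rewrite [(class_mx rs)^T j p]mxE [class_mx rs p j]mxE.
rewrite (rowE (fun j => (j \in enum_val p)%:R)).
have [x ->] := linkage_classP p; rewrite !inE.
have -> : connect (@ugraph R m rs) x b = connect (@ugraph R m rs) x a.
  have uab : ugraph a b by rewrite /ugraph ab.
  apply/idP/idP => h; last exact: connect_trans h (connect1 uab).
  by apply: connect_trans h _; rewrite connect_ugraph_sym connect1.
by rewrite subrr.
Qed.

(* The class indicators are linearly independent: choosing one complex in
   each class gives a right inverse of [class_mx]. *)
Lemma rank_class_mx rs : \rank (class_mx rs) = nlink rs.
Proof.
pose rep (q : 'I_(nlink rs)) := [pick j in enum_val q].
have repP q : exists2 j, rep q = Some j & j \in enum_val q.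
  rewrite /rep; case: pickP => [j qj|none]; first by exists j.
  by have [x Eq] := linkage_classP q; have := none x; rewrite Eq inE connect0.
pose sel : 'M[R]_(ncompl rs, nlink rs) := \matrix_(j, q) (rep q == Some j)%:R.
have inv : class_mx rs *m sel = 1%:M.
  apply/matrixP => p q; have [j0 rq qj0] := repP q.
  rewrite !mxE (bigD1 j0) //= !mxE rq eqxx mulr1 big1 ?addr0; last first.
    move=> j nj; rewrite !mxE rq; case: eqP => [[/eqP]|]; last by rewrite mulr0.
    by rewrite eq_sym (negbTE nj).
  have [->|npq] := eqVneq p q; first by rewrite qj0 ?eqxx.
  case: (boolP (j0 \in enum_val p)) => // pj0.
  by case/eqP: npq; apply: linkage_class_eq pj0 qj0.
apply/eqP; rewrite eqn_leq rank_leq_row /=.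
by rewrite -{1}(mxrank1 R (nlink rs)) -inv mxrankM_maxl.
Qed.

(* The l independent class indicators lie in the kernel of [incidence]. *)
Lemma nlink_rank_incidence rs :
  (nlink rs + \rank (incidence rs) <= ncompl rs)%N.
Proof.
have := mulmx0_rank_max (incidence_class_mx rs).
by rewrite mxrank_tr rank_class_mx addnC.
Qed.

Lemma deficiencyE rs :
  deficiency rs = ((ncompl rs - (nlink rs + \rank (incidence rs)))%N
                   + \rank (incidence rs :&: kermx (complex_mx rs))%MS)%:Z.
Proof.
have le_n := nlink_rank_incidence rs.
have ker := mxrank_mul_ker (incidence rs) (complex_mx rs).
rewrite /deficiency /sdim stoich_incidence -ker in le_n *.
move: (\rank (incidence rs *m complex_mx rs)) le_n => a.
move: (\rank (incidence rs :&: kermx (complex_mx rs)))%MS => b.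
move: (nlink rs) (ncompl rs) => l n; lia.
Qed.

Lemma deficiency_ge0 rs : 0 <= deficiency rs.
Proof. by rewrite deficiencyE. Qed.

Lemma deficiency0_incidence_kernel rs (v : 'rV[R]_(size rs)) :
  deficiency rs = 0 -> v *m stoich rs = 0 -> v *m incidence rs = 0.
Proof.
rewrite deficiencyE => -[] /eqP; rewrite addn_eq0 => /andP[_].
rewrite mxrank_eq0 => /eqP cap0; rewrite stoich_incidence mulmxA => vY.
apply/eqP; rewrite -submx0 -cap0 sub_capmx submxMl /=.
exact/sub_kermxP.
Qed.

(* A single reaction forms one linkage class with two complexes and a
   one-dimensional stoichiometric subspace. *)
Lemma deficiency_single (r : rct) : r.1 != r.2 -> deficiency [:: r] = 0.
Proof.
move=> ne; apply/le_anti; rewrite deficiency_ge0 andbT.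
have n2 : ncompl [:: r] = 2%N by rewrite /ncompl /complexes /= inE (negbTE ne).
have l1 : (0 < nlink [:: r])%N.
  have c0 : (0 < ncompl [:: r])%N by rewrite n2.
  rewrite /nlink card_gt0; apply/set0Pn.
  by exists [set j | connect (@ugraph R m [:: r]) (Ordinal c0) j]; apply: imset_f.
have s1 : (0 < sdim [:: r])%N.
  rewrite /sdim lt0n mxrank_eq0; apply: contra ne => /eqP/matrixP st0.
  by rewrite eq_sym -subr_eq0; apply/eqP/rowP => j; have := st0 ord0 j; rewrite !mxE.
rewrite /deficiency n2 -addrA -opprD subr_le0 -PoszD lez_nat.
by rewrite -(addn1 1); apply: leq_add.
Qed.

Definition deficiency_additive rs : Prop :=
  forall (k : nat) (f : rct -> 'I_k), is_decomposition rs f ->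
    deficiency rs = \sum_(i < k) deficiency (block rs f i).

Lemma singleton_decomposition rs : uniq rs -> rs != [::] ->
  exists k (f : rct -> 'I_k), is_decomposition rs f /\
    forall i, exists2 r, r \in rs & block rs f i = [:: r].
Proof.
case: rs => [//|x rs'] us _; set rs := x :: rs'.
pose f (r : rct) : 'I_(size rs) := inord (index r rs).
have blockE (i : 'I_(size rs)) : block rs f i = [:: nth x rs i].
  rewrite /block -(filter_pred1_uniq us (mem_nth x (ltn_ord i))).
  apply: eq_in_filter => r rr; rewrite /f; apply/eqP/eqP => [<-|->].
    by rewrite inordK ?nth_index // index_mem.
  by rewrite index_uniq // inord_val.
exists (size rs), f; split=> [i|i]; rewrite blockE //.
by exists (nth x rs i); rewrite ?mem_nth.
Qed.

(* Additivity over the singleton decomposition forces deficiency zero. *)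
Lemma additive_deficiency0 rs :
  is_crn rs -> rs != [::] -> deficiency_additive rs -> deficiency rs = 0.
Proof.
case/and3P=> us /allP distinct _ rs0 additive.
have [k [f [dec singles]]] := singleton_decomposition us rs0.
rewrite (additive k f dec) big1 // => i _.
by have [r rr ->] := singles i; apply/deficiency_single/distinct.
Qed.

(* Since deficiencies are nonnegative, a deficiency-zero network splits
   additively only into deficiency-zero blocks. *)
Lemma block_deficiency0 rs (k : nat) (f : rct -> 'I_k) :
  deficiency rs = 0 -> deficiency rs = \sum_(i < k) deficiency (block rs f i) ->
  forall i, deficiency (block rs f i) = 0.
Proof.
move=> -> /esym sum0 i.
by apply: (psumr_eq0P _ sum0) => // j _; apply: deficiency_ge0.
Qed.

Definition net_flux s w (y : cpx) : R :=
  \sum_(r <- s) w r * ((y == r.2)%:R - (y == r.1)%:R).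

Definition complex_balanced s w : Prop :=
  forall y, y \in complexes s -> net_flux s w y = 0.

Definition flux_row s w : 'rV[R]_(size s) := \row_(j < size s) w (nth (0,0) s j).

Lemma flux_row_incidence s w (p : 'I_(ncompl s)) :
  (flux_row s w *m incidence s) 0 p = net_flux s w (nth 0 (complexes s) p).
Proof.
rewrite !mxE /net_flux (big_nth (0,0)) big_mkord.
by apply: eq_bigr => j _; rewrite !mxE.
Qed.

Lemma complex_balancedP s w :
  complex_balanced s w <-> flux_row s w *m incidence s = 0.
Proof.
split=> [bal | inc0 y ys].
  by apply/rowP => p; rewrite flux_row_incidence mxE bal ?mem_nth.
by have [p <-] := nth_ord_exists 0 ys; rewrite -flux_row_incidence inc0 mxE.
Qed.

Lemma flux_row_stoich s w :
  flux_row s w *m stoich s = \sum_(r <- s) w r *: (r.2 - r.1).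
Proof.
rewrite mulmx_sum_row (big_nth (0,0)) big_mkord.
by apply: eq_bigr => j _; rewrite !mxE rowK.
Qed.

Lemma complex_balanced_species s w :
  complex_balanced s w -> \sum_(r <- s) w r *: (r.2 - r.1) = 0.
Proof.
move/complex_balancedP => inc0.
by rewrite -flux_row_stoich stoich_incidence mulmxA inc0 mul0mx.
Qed.

Lemma deficiency0_complex_balanced s w : deficiency s = 0 ->
  \sum_(r <- s) w r *: (r.2 - r.1) = 0 -> complex_balanced s w.
Proof.
move=> def0; rewrite -flux_row_stoich => species0.
exact/complex_balancedP/deficiency0_incidence_kernel.
Qed.

Definition positive_circulation s w : Prop :=
  (forall r, r \in s -> 0 < w r) /\ complex_balanced s w.

(* Summation by parts: the net flow into a set X of complexes is the flow
   along the reactions entering X minus the flow along those leaving it. *)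
Lemma net_flux_cut s w (X : pred cpx) :
  \sum_(y <- complexes s) (X y)%:R * net_flux s w y
  = \sum_(r <- s) w r * ((X r.2)%:R - (X r.1)%:R).
Proof.
rewrite /net_flux; under eq_bigr => y _ do rewrite big_distrr.
rewrite exchange_big /= !big_seq; apply: eq_bigr => r rr.
have [h1 h2] := mem_complexes rr.
under eq_bigr => y _ do rewrite mulrCA mulrBr ![_ * (y == _)%:R]mulrC.
by rewrite -big_distrr sumrB !sum_delta ?uniq_complexes.
Qed.

Lemma circulation_closed s w (X : pred cpx) : positive_circulation s w ->
  (forall r, r \in s -> X r.1 -> X r.2) -> forall r, r \in s -> X r.2 -> X r.1.
Proof.
move=> [wpos bal] closed.
have term_ge0 r : r \in s -> 0 <= w r * ((X r.2)%:R - (X r.1)%:R).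
  move=> rr; apply: mulr_ge0; first exact/ltW/wpos.
  case X1 : (X r.1); last by rewrite /= subr0 ler0n.
  by rewrite closed // subrr.
have sum0 : \sum_(r <- s | r \in s) w r * ((X r.2)%:R - (X r.1)%:R) = 0.
  rewrite -big_seq -net_flux_cut big_seq big1 // => y ys.
  by rewrite bal ?mulr0.
move=> r rr X2; apply/negPn/negP => /negbTE X1.
move/eqP: sum0; rewrite psumr_eq0 // => /allP/(_ r rr).
rewrite rr X1 X2 /= subr0 mulr1 => /eqP w0.
by have := wpos r rr; rewrite w0 ltxx.
Qed.

(* Positive circulation implies weak reversibility: for an edge b -> a, the
   complexes reachable from a form a set that no reaction leaves, so the
   reaction b -> a cannot enter it from outside, i.e. b is reachable from a. *)
Lemma circulation_weakly_reversible s w :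
  positive_circulation s w -> weakly_reversible s.
Proof.
move=> circ i j; apply: connect_sub => a b /orP[ab | ba]; first exact: connect1.
pose X y := [exists c : 'I_(ncompl s),
               connect (@Defs.rgraph R m s) a c && (nth 0 (complexes s) c == y)].
have closed r : r \in s -> X r.1 -> X r.2.
  move=> rr /existsP[c /andP[ac /eqP ec]].
  have [c1 [c2 [e1 e2 edge]]] := reaction_edge rr.
  apply/existsP; exists c2; rewrite e2 eqxx andbT.
  rewrite -(nth_complexes_inj (etrans ec (esym e1))) in edge.
  exact: connect_trans ac (connect1 edge).
have rba : (nth 0 (complexes s) b, nth 0 (complexes s) a) \in s by [].
have /existsP[c /andP[ac /eqP ec]] : X (nth 0 (complexes s) b).
  apply: (circulation_closed circ closed rba).
  by apply/existsP; exists a; rewrite connect0 eqxx.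
by rewrite -(nth_complexes_inj ec).
Qed.

Lemma net_flux_add s w1 w2 y :
  net_flux s (fun r => w1 r + w2 r) y = net_flux s w1 y + net_flux s w2 y.
Proof. by rewrite /net_flux -big_split; apply: eq_bigr => r _; rewrite mulrDl. Qed.

Lemma net_flux_reaction s e y : uniq s -> e \in s ->
  net_flux s (fun r => (r == e)%:R) y = (y == e.2)%:R - (y == e.1)%:R.
Proof. by move=> us es; rewrite /net_flux sum_delta. Qed.

Fixpoint path_flux s (x : 'I_(ncompl s)) (p : seq 'I_(ncompl s)) (r : rct) : R :=
  if p is y :: p' then
    (r == (nth 0 (complexes s) x, nth 0 (complexes s) y))%:R + path_flux y p' r
  else 0.

Lemma path_flux_ge0 s (x : 'I_(ncompl s)) p r : 0 <= path_flux x p r.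
Proof. by elim: p x => [|y p IH] x //=; rewrite addr_ge0 ?ler0n. Qed.

Lemma net_flux_path s y : uniq s -> forall x p, path (@Defs.rgraph R m s) x p ->
  net_flux s (path_flux x p) y
  = (y == nth 0 (complexes s) (last x p))%:R - (y == nth 0 (complexes s) x)%:R.
Proof.
move=> us x p; elim: p x => [|z p IH] x /=.
  by move=> _; rewrite /net_flux big1 ?subrr // => r _; rewrite mul0r.
case/andP => xz pz; rewrite net_flux_add net_flux_reaction // IH //=.
by rewrite addrC addrA subrK.
Qed.

(* In a weakly reversible network every reaction a -> b closes up, with a
   path from b back to a, into a cycle: a nonnegative circulation that is
   positive on the given reaction. *)
Lemma reaction_cycle s r : uniq s -> weakly_reversible s -> r \in s ->
  exists c : rct -> R,
    [/\ forall rho, 0 <= c rho, 0 < c r & forall y, net_flux s c y = 0].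
Proof.
move=> us wr rr; have [a [b [ea eb ab]]] := reaction_edge rr.
have /connectP[p pb la] : connect (@Defs.rgraph R m s) b a.
  by apply/wr/connect1; rewrite /ugraph ab orbT.
exists (fun rho => (rho == r)%:R + path_flux b p rho); split.
- by move=> rho; rewrite addr_ge0 ?ler0n ?path_flux_ge0.
- by rewrite eqxx ltr_pwDl ?ltr01 ?path_flux_ge0.
- move=> y; rewrite net_flux_add net_flux_reaction // net_flux_path // -la.
  by rewrite ea eb addrA subrK subrr.
Qed.

(* Summing one cycle per reaction gives a positive circulation. *)
Lemma weakly_reversible_circulation s : uniq s -> weakly_reversible s ->
  exists w, positive_circulation s w.
Proof.
move=> us wr.
suff circ_on (t : seq rct) : {subset t <= s} ->
    exists w : rct -> R, [/\ forall rho, 0 <= w rho,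
      forall r, r \in t -> 0 < w r & forall y, net_flux s w y = 0].
  by have [//|w [_ wpos bal]] := circ_on s; exists w; split=> // y _; apply: bal.
elim: t => [|r t IH] rt_s.
  by exists (fun _ => 0); split=> // y; rewrite /net_flux big1 // => r _; rewrite mul0r.
have [|w [w0 wpos bal]] := IH; first by move=> x xt; apply: rt_s; rewrite inE xt orbT.
have [|c [c0 cpos cbal]] := reaction_cycle us wr (rt_s r _); first by rewrite inE eqxx.
exists (fun rho => w rho + c rho); split.
- by move=> rho; rewrite addr_ge0.
- move=> rho; rewrite inE => /orP[/eqP -> | rt].
    exact: ltr_wpDl (w0 _) cpos.
  by rewrite addrC; apply: ltr_wpDl (c0 _) (wpos _ rt).
- by move=> y; rewrite net_flux_add bal cbal addr0.
Qed.

Lemma sum_blocks (V : nmodType) rs (k : nat) (f : rct -> 'I_k) (F : rct -> V) :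
  \sum_(i < k) \sum_(r <- block rs f i) F r = \sum_(r <- rs) F r.
Proof.
under eq_bigr => i _ do rewrite /block big_filter big_mkcond.
rewrite exchange_big /=; apply: eq_bigr => r _.
by rewrite -big_mkcond (big_pred1 (f r)) // => i; rewrite /= eq_sym.
Qed.

Lemma independent_block_species rs (k : nat) (f : rct -> 'I_k) w :
  independent rs f -> \sum_(r <- rs) w r *: (r.2 - r.1) = 0 ->
  forall i, \sum_(r <- block rs f i) w r *: (r.2 - r.1) = 0.
Proof.
case=> _ direct species0; apply: (mxdirect_sum_eq0 direct).
  by move=> i; rewrite -flux_row_stoich genmxE submxMl.
by rewrite sum_blocks.
Qed.

End Network.

Theorem mainTheorem6 (R : realFieldType) (m : nat) (rs : seq (reaction R m)) :
  is_crn rs ->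
  weakly_reversible rs ->
  (forall (k : nat) (f : reaction R m -> 'I_k),
      is_decomposition rs f ->
      deficiency rs = \sum_(i < k) deficiency (block rs f i)) ->
  forall (k : nat) (f : reaction R m -> 'I_k),
    is_decomposition rs f -> independent rs f ->
    weakly_reversible_decomposition rs f.
Proof.
move=> crn wr additive k f dec ind i.
have rs0 : rs != [::] by apply: contraNneq (dec i) => ->.
have def_blocks := block_deficiency0 (additive_deficiency0 crn rs0 additive)
                                     (additive k f dec).
have [us _ _] := and3P crn.
have [w [wpos wbal]] := weakly_reversible_circulation us wr.
have block_species := independent_block_species ind (complex_balanced_species wbal) i.
apply: (circulation_weakly_reversible (w := w)); split.
- by move=> r; rewrite mem_filter => /andP[_ /wpos].
- exact: deficiency0_complex_balanced (def_blocks i) block_species.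
Qed.
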